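(* Let $k$ be a field, let $p\ge 1$, and let $n_1<n_2<\cdots<n_p$ be positive integers with $\gcd(n_1,\dots,n_p)=1$. Let $S=\langle (0,n_p),(n_1,n_p-n_1),(n_2,n_p-n_2),\dots,(n_{p-1},n_p-n_{p-1}),(n_p,0)\rangle\subseteq\mathbb{N}^2$ and put $n_0=0$. Then the Hilbert–Kunz multiplicity of $k[S]$ is \[e_{\mathrm{HK}}(k[S])=1+\frac{1}{n_p}\left(\sum_{r=1}^p(n_r-1)(n_r-n_{r-1})\right).\]
   Context: $k[S]=\bigoplus_{(s_1,s_2)\in S}k\,t^{s_1}u^{s_2}\subseteq k[t,u]$ is the semigroup ring of $S$, a graded $k$-algebra of dimension $2$ with homogeneous maximal ideal $\mathfrak{m}$ generated by the monomials $t^{s_1}u^{s_2}$ for the listed generators $(s_1,s_2)$ of $S$. For a $D$-dimensional graded $k$-algebra $R$ with homogeneous maximal ideal $\mathfrak{m}=\langle x_1,\dots,x_s\rangle$, set $\mathfrak{m}^{[n]}=\langle x_1^n,\dots,x_s^n\rangle$; the Hilbert–Kunz multiplicity is $e_{\mathrm{HK}}(R)=\lim_{n\to\infty}\ell_R(R/\mathfrak{m}^{[n]})/n^{D}$ (in positive characteristic $q$, taken along $n=q^e$). *)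

From HB Require Import structures.
From mathcomp Require Import all_boot all_order all_algebra.
From mathcomp Require Import mpoly.
Set Implicit Arguments. Unset Strict Implicit. Unset Printing Implicit Defensive.
Import Order.TTheory GRing.Theory Num.Theory.
Local Open Scope ring_scope.

(* The data: n : nat -> nat with n 0 = 0 (the convention n_0 = 0) and
   n_1 < ... < n_p.  The generators of S are g_r = (n_r, n_p - n_r),
   r = 0..p (g_0 = (0,n_p), g_p = (n_p,0)). *)

Definition inS (n : nat -> nat) (p : nat) (a b : nat) : Prop :=
  exists c : nat -> nat,
    a = (\sum_(r < p.+1) c r * n r)%N /\ b = (\sum_(r < p.+1) c r * (n p - n r))%N.

Definition mon2 (a b : nat) : 'X_{1..2} :=
  [multinom (if i == ord0 then a else b) | i < 2].

(* k[S] as a subset of k[t,u]: polynomials all of whose monomials lie in S *)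
Definition in_kS (k : fieldType) (n : nat -> nat) (p : nat) (f : {mpoly k[2]}) : Prop :=
  forall m, m \in msupp f -> inS n p (m ord0) (m (lift ord0 ord0)).

(* the generator t^{n_r} u^{n_p - n_r} of the maximal ideal of k[S] *)
Definition genS (k : fieldType) (n : nat -> nat) (p r : nat) : {mpoly k[2]} :=
  'X_[mon2 (n r) (n p - n r)].

(* the Frobenius-type power ideal m^[q] = < x_0^q, ..., x_p^q > of k[S] *)
Definition in_frob_ideal (k : fieldType) (n : nat -> nat) (p q : nat)
    (f : {mpoly k[2]}) : Prop :=
  exists c : nat -> {mpoly k[2]},
    (forall r, in_kS n p (c r)) /\ f = \sum_(r < p.+1) c r * genS k n p r ^+ q.

Definition indep_mod (k : fieldType) (n : nat -> nat) (p q d : nat)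
    (f : 'I_d -> {mpoly k[2]}) : Prop :=
  (forall i, in_kS n p (f i)) /\
  forall a : 'I_d -> k,
    in_frob_ideal n p q (\sum_(i < d) a i *: f i) -> forall i, a i = 0.

(* dim_k (k[S] / m^[q]) = d ; since k[S]/m = k, this is the length
   l_{k[S]}(k[S]/m^[q]) *)
Definition quot_dim (k : fieldType) (n : nat -> nat) (p q d : nat) : Prop :=
  (exists f : 'I_d -> {mpoly k[2]}, indep_mod n p q f) /\
  (forall f : 'I_d.+1 -> {mpoly k[2]}, ~ indep_mod n p q f).

Definition rat_cvg (u : nat -> rat) (L : rat) : Prop :=
  forall eps : rat, 0 < eps -> exists N : nat, forall e, (N <= e)%N -> `|u e - L| < eps.

Definition HK_limit (k : fieldType) (len : nat -> nat) (L : rat) : Prop :=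
  let u := fun m : nat => (len m)%:R / (m ^ 2)%:R : rat in
  ((forall q, q \in [pchar k] -> rat_cvg (fun e => u (q ^ e)%N) L) /\
   ([pchar k] =i pred0 -> rat_cvg u L)).

(* The ring k[S] is spanned by the monomials t^a u^(d n_p - a) where a is a sum
   of exactly d of the n_r, and k[S]/m^[q] has as basis those outside the
   translates q g_r + S of S.  Since gcd (n_1, ..., n_p) = 1 there is a K such
   that every a with K <= a <= d n_p - K is such a sum.  Up to O(q) errors, the
   surviving exponents are therefore all 0 <= a <= d n_p in the degrees d < q,
   and, in degree q + j, the a with q n_r + j n_p < a < q n_(r+1) for some r.
   Counting gives the length (n_p^2 + sum_r (n_(r+1) - n_r)^2) q^2 / (2 n_p)
   + O(q), and this leading coefficient is the stated value. *)

From mathcomp Require Import all_boot all_order all_algebra.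
From mathcomp Require Import mpoly.
From mathcomp Require Import zify ring lra.
From Stdlib Require Import ClassicalEpsilon.
Import Order.TTheory GRing.Theory Num.Theory.
Set Implicit Arguments. Unset Strict Implicit. Unset Printing Implicit Defensive.

Lemma leq_sum_nat m k (F G : nat -> nat) : (forall i, m <= i < k -> F i <= G i) ->
  \sum_(m <= i < k) F i <= \sum_(m <= i < k) G i.
Proof.
move=> h; rewrite big_nat_cond [X in _ <= X]big_nat_cond.
by apply: leq_sum => i /andP [hi _]; exact: h.
Qed.

Lemma sum_itv_indicator M lo hi :
  \sum_(0 <= a < M) ((lo <= a) && (a < hi)) = minn hi M - lo.
Proof.
elim: M => [|M IH]; first by rewrite big_geq //; lia.
rewrite big_nat_recr //= IH.
case: (leqP lo M) => h1; case: (ltnP M hi) => h2 /=; lia.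
Qed.

Lemma sum_indicator_eq m r c : \sum_(0 <= x < m) (x == r) * c = (r < m) * c.
Proof.
elim: m => [|m IH]; first by rewrite big_geq.
rewrite big_nat_recr //= IH.
case: eqP => [->|ne]; first by rewrite ltnn ltnSn.
have -> : (r < m.+1) = (r < m) by apply/idP/idP; lia.
by rewrite addn0.
Qed.

Lemma leq_term_sum_nat (F : nat -> nat) r m : r < m -> F r <= \sum_(0 <= x < m) F x.
Proof.
move=> hr; rewrite (@big_cat_nat _ _ _ r) ?(ltnW hr) //= [X in _ + X]big_ltn //=.
lia.
Qed.

Lemma leq_sum_nat_prefix (F : nat -> nat) a b : a <= b ->
  \sum_(0 <= j < a) F j <= \sum_(0 <= j < b) F j.
Proof. by move=> h; rewrite (@big_cat_nat _ _ _ a 0 b) /= ?leq_addr. Qed.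

Lemma sum_pairwise_exclusive_le (F : nat -> bool) (b : bool) m :
  (forall r s, r < s -> s < m -> F r -> F s -> False) ->
  (forall x, x < m -> F x -> b) ->
  \sum_(0 <= x < m) F x <= b.
Proof.
elim: m => [|m IH] hex hb; first by rewrite big_geq.
rewrite big_nat_recr //=; case hm: (F m); last first.
  by rewrite addn0; apply: IH => [r s hrs hs|x hx]; [apply: hex; lia | apply: hb; lia].
rewrite (hb m (ltnSn m) hm) big_nat_cond big1 // => x /andP [/andP [_ hx] _].
by apply/eqP; rewrite eqb0; apply/negP => hx'; apply: (hex x m hx (ltnSn m) hx' hm).
Qed.

Lemma sum_arith_double N t : 2 * \sum_(0 <= d < t) (d * N + 1) + t * N = t * t * N + 2 * t.
Proof. elim: t => [|t IH]; first by rewrite big_geq. rewrite big_nat_recr //=; nia. Qed.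

Definition stair_sum N m T := \sum_(0 <= j < T) (m - j * N).

Lemma stair_sumS N m T : 0 < N ->
  stair_sum N m.+1 T = stair_sum N m T + minn (m %/ N).+1 T.
Proof.
move=> hN; rewrite /stair_sum.
rewrite (eq_big_nat _ _ (F2 := fun j => (m - j * N) + ((0 <= j) && (j < (m %/ N).+1)))).
  by rewrite big_split /= -(subn0 (minn _ _)) -sum_itv_indicator.
move=> j _; rewrite leq0n /= ltnS leq_divRL //; case: (leqP (j * N) m) => /= h; lia.
Qed.

Lemma stair_sum_upper N m T : 0 < N -> 2 * N * stair_sum N m T <= m * m + 2 * N * m.
Proof.
move=> hN; elim: m => [|m IH].
  by rewrite /stair_sum big_nat_cond big1 ?muln0 // => j _; rewrite sub0n.
rewrite stair_sumS //.
have := leq_divM m N; have : minn (m %/ N).+1 T <= (m %/ N).+1 by rewrite geq_minl.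
move: (minn (m %/ N).+1 T) => v; move: (m %/ N) => u; nia.
Qed.

Lemma stair_sum_lower N m T : 0 < N -> m <= T * N -> m * m <= 2 * N * stair_sum N m T.
Proof.
move=> hN; elim: m => [|m IH] hm; first lia.
rewrite stair_sumS //.
have h1 := ltn_ceil m hN.
have h2 : m %/ N < T by rewrite ltn_divLR //; lia.
rewrite (minn_idPl h2); have := IH (ltnW hm); move: (m %/ N) h1 h2 => u; nia.
Qed.

Lemma sum_itv_trim lo hi b K M : hi <= b -> b < M ->
  hi - lo <= \sum_(0 <= a < M) [&& lo <= a, a < hi, K <= a & a + K <= b] + 2 * K.
Proof.
move=> hb hM.
have -> : hi - lo = \sum_(0 <= a < M) ((lo <= a) && (a < hi)).
  by rewrite sum_itv_indicator (minn_idPl _) //; lia.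
apply: leq_trans (_ : \sum_(0 <= a < M) ([&& lo <= a, a < hi, K <= a & a + K <= b]
    + ((0 <= a) && (a < K)) + ((b.+1 - K <= a) && (a < b.+1))) <= _).
  apply: leq_sum_nat => a _.
  case: (leqP lo a) => ?; case: (ltnP a hi) => ? //=.
  case: (leqP K a) => ?; case: (leqP (a + K) b) => ? //=;
  case: (ltnP a K) => ? //=; case: (leqP (b.+1 - K) a) => ?; case: (ltnP a b.+1) => ? //=; lia.
have hK : \sum_(0 <= i < M) (i < K) = minn K M.
  by rewrite -(subn0 (minn K M)) -sum_itv_indicator.
rewrite !big_split /= !sum_itv_indicator hK; lia.
Qed.

Definition asbool (P : Prop) : bool := if excluded_middle_informative P then true else false.

Lemma asboolP (P : Prop) : reflect P (asbool P).
Proof. by rewrite /asbool; case: excluded_middle_informative => h; constructor. Qed.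

Lemma exists_transition (P : nat -> bool) m : P 0 -> ~~ P m ->
  exists r, [/\ r < m, P r & ~~ P r.+1].
Proof.
elim: m => [-> //|m IH] h0 hm.
case hPm: (P m); first by exists m.
by have [r [h1 h2 h3]] := IH h0 (negbT hPm); exists r; split => //; exact: ltnW.
Qed.

Definition i1 : 'I_2 := lift ord0 ord0.

Lemma mon2E0 a b : mon2 a b ord0 = a.
Proof. by rewrite /mon2 mnmE. Qed.

Lemma mon2E1 a b : mon2 a b i1 = b.
Proof. by rewrite /mon2 mnmE. Qed.

Lemma ord2_cases (i : 'I_2) : i = ord0 \/ i = i1.
Proof. by case: i => [[|[|j]]] hi //=; [left|right]; apply/val_inj. Qed.

Lemma mon2_eta (m : 'X_{1..2}) : m = mon2 (m ord0) (m i1).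
Proof. by apply/mnmP => i; case: (ord2_cases i) => ->; rewrite ?mon2E0 ?mon2E1. Qed.

Lemma mon2_inj a b a' b' : mon2 a b = mon2 a' b' -> a = a' /\ b = b'.
Proof.
move=> h; split; first by rewrite -(mon2E0 a b) h mon2E0.
by rewrite -(mon2E1 a b) h mon2E1.
Qed.

Lemma lem2E (m m' : 'X_{1..2}) : (m <= m')%MM = (m ord0 <= m' ord0) && (m i1 <= m' i1).
Proof.
apply/mnm_lepP/andP => [h|[h0 h1] i]; first by split; apply: h.
by case: (ord2_cases i) => ->.
Qed.

Section SemigroupRing.
Local Open Scope ring_scope.
Variables (k : fieldType) (n : nat -> nat) (p : nat).

Lemma in_kS_X (m : 'X_{1..2}) :
  inS n p (m ord0) (m i1) -> in_kS n p ('X_[m] : {mpoly k[2]}).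
Proof. by move=> h m'; rewrite msuppX mem_seq1 => /eqP ->. Qed.

Lemma in_kS_scale (c : k) (f : {mpoly k[2]}) : in_kS n p f -> in_kS n p (c *: f).
Proof. by move=> h m /msuppZ_le; apply: h. Qed.

Lemma in_kS_sum (I : eqType) (r : seq I) (F : I -> {mpoly k[2]}) :
  (forall i, in_kS n p (F i)) -> in_kS n p (\sum_(i <- r) F i).
Proof. by move=> h m /msupp_sum_le /flattenP [s /mapP [i _ ->] hm]; exact: h hm. Qed.

Lemma in_kS_scaleX (c : k) (m : 'X_{1..2}) :
  (c = 0 \/ inS n p (m ord0) (m i1)) -> in_kS n p (c *: ('X_[m] : {mpoly k[2]})).
Proof.
case=> [->|h]; last exact/in_kS_scale/in_kS_X.
by rewrite scale0r => m'; rewrite msupp0.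
Qed.

End SemigroupRing.

Section LinearAlgebra.
Local Open Scope ring_scope.
Variable k : fieldType.

Lemma exists_left_kernel_vector L (M : 'M[k]_(L.+1, L)) :
  exists a : 'I_L.+1 -> k, (exists i, a i != 0) /\ forall j, \sum_i a i * M i j = 0.
Proof.
have hker : kermx M != 0.
  rewrite -mxrank_eq0 mxrank_ker subn_eq0 -ltnNge.
  exact: leq_ltn_trans (rank_leq_col M) _.
have [i0 [j0 hij]] : exists i0 j0, kermx M i0 j0 != 0.
  case: (boolP [exists i0, exists j0, kermx M i0 j0 != 0]).
    by move=> /existsP [i0 /existsP [j0 h]]; exists i0, j0.
  move=> hn; exfalso; move/negP: hker; apply; apply/eqP/matrixP => i j.
  rewrite [RHS]mxE; apply/eqP; move: hn; apply: contraNT => h.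
  by apply/existsP; exists i; apply/existsP; exists j.
exists (fun i => kermx M i0 i); split; first by exists j0.
move=> j; have := congr1 (fun A : 'M[k]_(L.+1, L) => A i0 j) (mulmx_ker M).
by rewrite !mxE.
Qed.

End LinearAlgebra.

Section Rational.
Local Open Scope ring_scope.

Lemma sum_telescope_sq (R : comPzRingType) (x : nat -> R) t : x 0%N = 0 ->
  2 * (\sum_(0 <= r < t) (x r.+1 - 1) * (x r.+1 - x r)) =
  x t ^+ 2 + \sum_(0 <= r < t) (x r.+1 - x r) ^+ 2 - 2 * x t.
Proof.
move=> h0; elim: t => [|t IH]; first by rewrite !big_geq // h0; ring.
by rewrite !big_nat_recr //= mulrDr IH; ring.
Qed.

Lemma rat_dist_of_bounds (L E C W m : nat) (eps : rat) : (0 < W)%N -> (0 < m)%N ->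
  (W * L <= E * (m * m) + C * m)%N -> (E * (m * m) <= W * L + C * m)%N ->
  C%:R < eps * m%:R -> `|L%:R / (m ^ 2)%:R - E%:R / W%:R| < eps.
Proof.
move=> hW hm; rewrite -!(ler_nat rat) !natrD !natrM => h1 h2 hC.
have hs : 0 < (m%:R : rat) by rewrite ltr0n.
have hw : 1 <= (W%:R : rat) by rewrite ler1n.
have hc0 : 0 <= (C%:R : rat) by rewrite ler0n.
move: h1 h2 hs hw hC hc0.
move: (L%:R : rat) (m%:R : rat) (W%:R : rat) (E%:R : rat) (C%:R : rat) => a s w e c.
move=> h1 h2 hs hw hC hc0.
have hpos : 0 < w * (s * s) by apply: mulr_gt0; [lra | apply: mulr_gt0].
have -> : a / (s * s) - e / w = (w * a - e * (s * s)) / (w * (s * s)).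
  by field; rewrite gt_eqF //= gt_eqF //; lra.
rewrite normrM normfV (gtr0_norm hpos) ltr_pdivrMr //.
have hn : `|w * a - e * (s * s)| <= c * s by rewrite ler_norml; apply/andP; split; lra.
apply: le_lt_trans hn _.
have hep : 0 < eps by move: (le_lt_trans hc0 hC); rewrite pmulr_lgt0.
have h3 : c * s < eps * s * s by rewrite ltr_pM2r.
have h4 : eps * s * s <= eps * (w * (s * s)).
  rewrite mulrA [eps * w]mulrC -mulrA -[X in X <= _]mul1r -mulrA.
  by rewrite ler_pM2r; [lra | apply: mulr_gt0 => //; apply: mulr_gt0].
lra.
Qed.

Lemma rat_cvg_quadratic (len : nat -> nat) (W E C : nat) : (0 < W)%N ->
  (forall q, (0 < q)%N -> (W * len q <= E * (q * q) + C * q)%N /\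
                          (E * (q * q) <= W * len q + C * q)%N) ->
  rat_cvg (fun m => (len m)%:R / (m ^ 2)%:R) (E%:R / W%:R).
Proof.
move=> hW hb eps heps.
have h0 : 0 <= C%:R / eps by apply: divr_ge0 => //; apply: ltW.
exists (Num.Def.archi_bound (C%:R / eps)).+1 => m hm.
have hm0 : (0 < m)%N by apply: leq_trans hm.
have [b1 b2] := hb m hm0; apply: rat_dist_of_bounds hW hm0 b1 b2 _.
have := archi_boundP h0; rewrite ltr_pdivrMr // => h.
by apply: lt_le_trans h _; rewrite mulrC ler_pM2l // ler_nat ltnW.
Qed.

Lemma HK_limit_of_cvg (k : fieldType) (len : nat -> nat) (L : rat) :
  rat_cvg (fun m => (len m)%:R / (m ^ 2)%:R) L -> HK_limit k len L.
Proof.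
move=> hcvg; split=> [q hq eps heps|_ //].
have hq1 : (1 < q)%N by apply/prime_gt1/(pcharf_prime hq).
have [M hM] := hcvg eps heps; exists M => e he; apply: hM.
exact: leq_trans he (ltnW (ltn_expl _ hq1)).
Qed.

End Rational.

Section Semigroup.
Variables (n : nat -> nat) (p : nat).
Hypothesis hp : 1 <= p.
Hypothesis hn0 : n 0 = 0.
Hypothesis hinc : forall i, i < p -> n i < n i.+1.

Lemma n_leq i j : i <= j -> j <= p -> n i <= n j.
Proof.
move=> hij; elim: j hij => [|j IH]; first by rewrite leqn0 => /eqP ->.
rewrite leq_eqVlt => /orP [/eqP -> //|hij] hj.
have := hinc hj; have := IH hij (ltnW hj); lia.
Qed.

Lemma n_ltn i j : i < j -> j <= p -> n i < n j.
Proof. by move=> hij hj; apply: leq_trans (hinc (leq_trans hij hj)) (n_leq hij hj). Qed.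

Lemma n_gt0 r : 0 < r -> r <= p -> 0 < n r.
Proof. by move=> h0 hr; have := n_ltn h0 hr; rewrite hn0. Qed.

Lemma n_le_np r : r <= p -> n r <= n p.
Proof. by move=> hr; apply: n_leq. Qed.

Lemma n_lt_np r : r < p -> n r < n p.
Proof. by move=> hr; apply: n_ltn. Qed.

Lemma np_gt0 : 0 < n p.
Proof. exact: n_gt0. Qed.

(* [inA d a] : [(a, d * n p - a)] is a sum of exactly [d] generators of [S]. *)
Definition inA (d a : nat) : Prop := exists c : nat -> nat,
  \sum_(0 <= r < p.+1) c r = d /\ \sum_(0 <= r < p.+1) c r * n r = a.

Lemma inA_le d a : inA d a -> a <= d * n p.
Proof.
move=> [c [<- <-]]; rewrite big_distrl /=.
by apply: leq_sum_nat => r /andP [_ hr]; rewrite leq_mul2l n_le_np ?orbT.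
Qed.

(* The generator [n 0 = 0] pads the degree, and each other generator counts at least 1. *)
Lemma inA_regrade d a j : inA d a -> a <= j -> inA j a.
Proof.
move=> [c [hd ha]] haj.
move: hd ha; rewrite !big_nat_recl // hn0 muln0 add0n.
set s := \sum_(0 <= i < p) c i.+1; set t := \sum_(0 <= i < p) c i.+1 * n i.+1.
move=> hd ha.
have hst : s <= t.
  apply: leq_sum_nat => i /andP [_ hi].
  by rewrite -{1}[c i.+1]muln1 leq_mul2l n_gt0 ?orbT.
exists (fun r => if r is 0 then j - s else c r); split.
  by rewrite big_nat_recl //= -/s; lia.
by rewrite big_nat_recl //= hn0 muln0 add0n -/t.
Qed.

(* Symmetrically, [n p] pads from the top and each other generator falls short of it by 1. *)
Lemma inA_regrade_top d a j q : inA d a -> d = q + j -> d * n p - a <= j ->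
  inA j (a - q * n p).
Proof.
move=> [c [hd ha]] hdq hj.
move: hd ha; rewrite !big_nat_recr //=.
set s := \sum_(0 <= i < p) c i; set t := \sum_(0 <= i < p) c i * n i.
move=> hd ha.
have hst : s + t <= s * n p.
  rewrite /s /t -big_split big_distrl /=; apply: leq_sum_nat => i /andP [_ hi].
  by rewrite -{1}[c i]muln1 -mulnDr leq_mul2l add1n n_lt_np ?orbT.
have hcp F : \sum_(0 <= i < p) (if i == p then F i else c i) = s.
  by apply: eq_big_nat => i /andP [_ hi]; rewrite ltn_eqF.
exists (fun r => if r == p then j - s else c r); split.
  rewrite big_nat_recr //= eqxx hcp; nia.
rewrite big_nat_recr //= eqxx.
rewrite (eq_big_nat _ _ (F2 := fun i => c i * n i)); last first.
  by move=> i /andP [_ hi]; rewrite ltn_eqF.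
rewrite -/t; nia.
Qed.

Lemma sum_gen_coords (c : nat -> nat) :
  \sum_(0 <= r < p.+1) c r * n r + \sum_(0 <= r < p.+1) c r * (n p - n r)
  = (\sum_(0 <= r < p.+1) c r) * n p.
Proof.
rewrite -big_split big_distrl /=; apply: eq_big_nat => r /andP [_ hr].
by rewrite -mulnDr subnKC // n_le_np.
Qed.

Lemma inS_inA a b : inS n p a b <-> exists d, inA d a /\ a + b = d * n p.
Proof.
have mkord (c : nat -> nat) :
    (\sum_(r < p.+1) c r * n r = \sum_(0 <= r < p.+1) c r * n r) /\
    (\sum_(r < p.+1) c r * (n p - n r) = \sum_(0 <= r < p.+1) c r * (n p - n r)).
  by rewrite !big_mkord.
rewrite /inS; split.
  move=> [c [ha hb]]; have [e1 e2] := mkord c; rewrite e1 in ha; rewrite e2 in hb.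
  exists (\sum_(0 <= r < p.+1) c r); split; first by exists c.
  by rewrite ha hb sum_gen_coords.
move=> [d [[c [hd ha]] hab]]; exists c; have [-> ->] := mkord c; split => //.
by have := sum_gen_coords c; rewrite hd ha; lia.
Qed.

Section Residues.

Definition reachable_mod x := exists c : nat -> nat,
  (\sum_(0 <= r < p.+1) c r * n r) %% n p = x %% n p.

Lemma reachable_modD x y u v :
  reachable_mod x -> reachable_mod y -> reachable_mod (u * x + v * y).
Proof.
move=> [c hc] [c' hc']; exists (fun r => u * c r + v * c' r).
rewrite (eq_big_nat _ _ (F2 := fun r => u * (c r * n r) + v * (c' r * n r))); last first.
  by move=> r _; rewrite mulnDl !mulnA.
rewrite big_split /= -!big_distrr /=.
by rewrite -modnDm -(modnMmr u) hc modnMmr -(modnMmr v) hc' modnMmr modnDm.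
Qed.

Lemma reachable_mod_n r : r <= p -> reachable_mod (n r).
Proof.
move=> hr; exists (fun x => (x == r) : nat).
rewrite (eq_big_nat _ _ (F2 := fun x => (x == r) * n r)); last first.
  by move=> x _; case: eqP => [->|_].
by rewrite sum_indicator_eq ltnS hr mul1n.
Qed.

(* Bezout with nonnegative coefficients: [- y] is [(n p).-1 * y] modulo [n p]. *)
Lemma reachable_mod_gcd x y :
  reachable_mod x -> reachable_mod y -> reachable_mod (gcdn x y).
Proof.
move=> hx hy; case: (posnP x) => [->|xpos]; first by rewrite gcd0n.
case: (egcdnP y xpos) => km kn hb _.
have [c hc] := reachable_modD km (kn * (n p).-1) hx hy; exists c; rewrite hc.
have -> : km * x + kn * (n p).-1 * y = gcdn x y + (kn * y) * n p.
  have -> : n p = (n p).-1.+1 by rewrite prednK // np_gt0.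
  rewrite -pred_Sn; nia.
by rewrite addnC modnMDl.
Qed.

Lemma reachable_mod_big_gcd j : j <= p -> reachable_mod (\big[gcdn/0]_(1 <= i < j.+1) n i).
Proof.
elim: j => [|j IH] hj.
  by rewrite big_geq //; exists (fun _ => 0); rewrite big_nat_cond big1.
rewrite big_nat_recr //=; apply: reachable_mod_gcd; first exact: IH (ltnW hj).
exact: reachable_mod_n.
Qed.

Hypothesis hgcd : \big[gcdn/0]_(1 <= i < p.+1) n i = 1.

Lemma reachable_modT y : reachable_mod y.
Proof.
have h1 : reachable_mod 1 by rewrite -hgcd; apply: reachable_mod_big_gcd.
by have := reachable_modD y 0 h1 h1; rewrite muln1 mul0n addn0.
Qed.

Lemma reachable_mod_uniform Y : exists B L, forall y, y < Y -> exists c : nat -> nat,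
  [/\ \sum_(0 <= r < p.+1) c r <= L, \sum_(0 <= r < p.+1) c r * n r <= B &
      (\sum_(0 <= r < p.+1) c r * n r) %% n p = y %% n p].
Proof.
elim: Y => [|Y [B [L IH]]]; first by exists 0, 0.
have [c hc] := reachable_modT Y.
exists (B + \sum_(0 <= r < p.+1) c r * n r), (L + \sum_(0 <= r < p.+1) c r).
move=> y; rewrite ltnS leq_eqVlt => /orP [/eqP ->|hy].
  by exists c; split => //; rewrite leq_addl.
have [c' [h1 h2 h3]] := IH y hy; exists c'; split => //.
  exact: leq_trans h1 (leq_addr _ _).
exact: leq_trans h2 (leq_addr _ _).
Qed.

(* Fill the residue class of [a] with a bounded combination, then pad with [n p] and [n 0]. *)
Lemma inA_middle : exists K, forall d a, K <= a -> a + K <= d * n p -> inA d a.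
Proof.
have Npos := np_gt0.
have [B [L hBL]] := reachable_mod_uniform (n p).
exists (B + L * n p) => d a hKa hKd.
have [c [hs he hm]] := hBL (a %% n p) (ltn_pmod _ Npos).
set s := \sum_(0 <= r < p.+1) c r in hs *.
set e := \sum_(0 <= r < p.+1) c r * n r in he hm *.
rewrite modn_mod in hm.
have hdiv : n p %| a - e by rewrite -eqn_mod_dvd // ?hm; lia.
set t := (a - e) %/ n p.
have ht : t * n p = a - e by rewrite /t divnK.
have hst : s + t <= d.
  have hLd : L <= d by rewrite -(leq_pmul2r Npos); lia.
  have : t * n p <= (d - L) * n p by rewrite ht; nia.
  rewrite leq_pmul2r //; lia.
exists (fun r => c r + (r == p) * t + (r == 0) * (d - s - t)); split.
  rewrite !big_split /= !sum_indicator_eq ltnSn ltnS leq0n -/s; lia.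
rewrite (eq_big_nat _ _ (F2 := fun r =>
  c r * n r + (r == p) * (t * n p) + (r == 0) * ((d - s - t) * n 0))); last first.
  move=> r _; rewrite !mulnDl -!mulnA.
  by case: (r =P p) => [->|_]; last case: (r =P 0) => [->|_]; rewrite ?(gtn_eqF hp) ?hn0.
rewrite !big_split /= !sum_indicator_eq ltnSn ltnS leq0n -/e hn0; lia.
Qed.

End Residues.

Definition sum_sq_gaps := \sum_(0 <= r < p) (n r.+1 - n r) * (n r.+1 - n r).

Lemma gap_le_np r : r < p -> n r.+1 - n r <= n p.
Proof. by move=> hr; have := n_le_np hr; lia. Qed.

Section Counting.
Variable K : nat.
Hypothesis hK : forall d a, K <= a -> a + K <= d * n p -> inA d a.
Variable q : nat.
Hypothesis hq : 0 < q.

(* [(a, d * n p - a)] lies in [q g_r + S] for some generator [g_r]. *)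
Definition coveredA d a := exists r j,
  [/\ r <= p, d = q + j, q * n r <= a & inA j (a - q * n r)].

(* The exponents [(a, d * n p - a)] of the monomials of [k[S]] outside [m^[q]]. *)
Definition stdA d a : bool := asbool (inA d a /\ ~ coveredA d a).

Lemma stdA_le d a : stdA d a -> a <= d * n p.
Proof. by move/asboolP => [h _]; exact: inA_le h. Qed.

Lemma stdA_low_deg d a : d < q -> K <= a -> a + K <= d * n p -> stdA d a.
Proof.
move=> hd h1 h2; apply/asboolP; split; first exact: hK.
by move=> [r [j [_ hj _ _]]]; lia.
Qed.

Lemma stdA_high_deg j a r : r < p -> q * n r + j * n p < a -> a < q * n r.+1 ->
  K <= a -> a + K <= (q + j) * n p -> stdA (q + j) a.
Proof.
move=> hr h1 h2 h3 h4; apply/asboolP; split; first exact: hK.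
move=> [s [j' [hs hj hsa hm]]].
have hjj : j' = j by lia.
subst j'.
have := inA_le hm; case: (leqP s r) => hsr.
  have : q * n s <= q * n r by rewrite leq_mul2l n_leq ?orbT // ltnW.
  lia.
have : q * n r.+1 <= q * n s by rewrite leq_mul2l n_leq ?orbT.
lia.
Qed.

Lemma stdA_high_deg_window j a : K <= j -> stdA (q + j) a ->
  exists r, [/\ r < p, q * n r + j * n p < a + K & a < q * n r.+1 + K].
Proof.
move=> hKj /asboolP [hA hcov].
have Npos := np_gt0; have hle := inA_le hA.
have hKa : K <= a.
  rewrite leqNgt; apply/negP => haK; apply: hcov; exists 0, j.
  rewrite hn0 muln0 subn0; split => //; apply: inA_regrade hA _; lia.
have hKd : a + K <= (q + j) * n p.
  rewrite leqNgt; apply/negP => hlt; apply: hcov; exists p, j; split => //.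
    nia.
  apply: (inA_regrade_top hA); lia.
have hnot r : r <= p -> q * n r + K <= a -> a + K <= q * n r + j * n p -> False.
  move=> hr h1 h2; apply: hcov; exists r, j; split => //; first lia.
  apply: hK; lia.
have hP0 : q * n 0 + K <= a by rewrite hn0 muln0.
have hPp : ~~ (q * n p + K <= a) by apply/negP => h; apply: (hnot p) => //; lia.
have [r [hr h1 h2]] := @exists_transition (fun r => q * n r + K <= a) p hP0 hPp.
exists r; split => //; last by lia.
by rewrite ltnNge; apply/negP => h; exact: (hnot r (ltnW hr) h1 h).
Qed.

Definition deg_bound := q + (q + 2 * K + 1).

Lemma stdA_deg_lt d a : inA d a -> ~ coveredA d a -> d < deg_bound.
Proof.
move=> hA hc; rewrite /deg_bound ltnNge; apply/negP => hd.
have Npos := np_gt0.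
have hqd : q <= d by lia.
have hstd : stdA (q + (d - q)) a by rewrite subnKC //; apply/asboolP.
have [|r [hr h1 h2]] := stdA_high_deg_window _ hstd; first lia.
have : q * n r.+1 <= q * n p by rewrite leq_mul2l n_le_np ?orbT.
have : (q + 2 * K + 1) * n p <= (d - q) * n p by rewrite leq_mul2r; lia.
nia.
Qed.

Definition count_std M d := \sum_(0 <= a < M) stdA d a.

Lemma count_std_le M d : count_std M d <= d * n p + 1.
Proof.
apply: leq_trans (_ : \sum_(0 <= a < M) ((0 <= a) && (a < (d * n p).+1)) <= _).
  by apply: leq_sum_nat => a _; case h: (stdA d a) => //=; have := stdA_le h; lia.
rewrite sum_itv_indicator; lia.
Qed.

Lemma count_std_low_deg_ge M d : d < q -> d * n p < M -> d * n p + 1 <= count_std M d + 2 * K.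
Proof.
move=> hd hM.
have : \sum_(0 <= a < M) ((K <= a) && (a < (d * n p).+1 - K)) <= count_std M d.
  apply: leq_sum_nat => a _; case h: ((K <= a) && _) => //=.
  by rewrite stdA_low_deg //; lia.
rewrite sum_itv_indicator; lia.
Qed.

Lemma count_std_high_deg_le M j : K <= j ->
  count_std M (q + j) <= \sum_(0 <= r < p) ((q * (n r.+1 - n r) + 2 * K) - j * n p).
Proof.
move=> hKj.
pose G r a := (q * n r + j * n p + 1 - K <= a) && (a < q * n r.+1 + K).
apply: leq_trans (_ : \sum_(0 <= a < M) \sum_(0 <= r < p) G r a <= _).
  apply: leq_sum_nat => a _; case h: (stdA _ a) => //.
  have [r [hr h1 h2]] := stdA_high_deg_window hKj h.
  apply: leq_trans (leq_term_sum_nat (fun r => (G r a : nat)) hr).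
  by have -> : G r a = true by apply/andP; split; lia.
rewrite exchange_big_nat; apply: leq_sum_nat => r /andP [_ hr].
rewrite sum_itv_indicator.
have : q * n r <= q * n r.+1 by rewrite leq_mul2l n_leq ?orbT.
rewrite mulnBr; lia.
Qed.

Lemma count_std_high_deg_ge M j : (q + j) * n p < M ->
  \sum_(0 <= r < p) (q * n r.+1 - (q * n r + j * n p + 1))
    <= count_std M (q + j) + p * (2 * K).
Proof.
move=> hM.
pose G r a := [&& q * n r + j * n p + 1 <= a, a < q * n r.+1, K <= a & a + K <= (q + j) * n p].
apply: leq_trans (_ : \sum_(0 <= r < p) (\sum_(0 <= a < M) G r a + 2 * K) <= _).
  apply: leq_sum_nat => r /andP [_ hr]; apply: sum_itv_trim => //.
  apply: leq_trans (_ : q * n p <= _); first by rewrite leq_mul2l n_le_np ?orbT.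
  by rewrite leq_mul2r leq_addr orbT.
rewrite big_split /= sum_nat_const_nat subn0 leq_add2r exchange_big_nat.
apply: leq_sum_nat => a _; apply: sum_pairwise_exclusive_le.
  move=> r s hrs hs /and4P [_ h1 _ _] /and4P [h2 _ _ _].
  have : q * n r.+1 <= q * n s by rewrite leq_mul2l n_leq ?orbT // ltnW.
  lia.
by move=> r hr /and4P [h1 h2 h3 h4]; apply: (stdA_high_deg hr) => //; lia.
Qed.

Definition exp_bound := deg_bound * n p + 1.
Definition std_total := \sum_(0 <= d < deg_bound) count_std exp_bound d.

Lemma std_total_split : std_total = \sum_(0 <= d < q) count_std exp_bound d
  + \sum_(0 <= j < q + 2 * K + 1) count_std exp_bound (q + j).
Proof.
rewrite /std_total /deg_bound (@big_cat_nat _ _ _ q 0) ?leq_addr //=; congr (_ + _).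
rewrite -{1}(add0n q) big_addn addKn.
by apply: eq_big_nat => j _; rewrite addnC.
Qed.

Lemma std_low_upper : 2 * n p * \sum_(0 <= d < q) count_std exp_bound d
  <= n p * n p * (q * q) + 2 * n p * q.
Proof.
have hU : \sum_(0 <= d < q) count_std exp_bound d <= \sum_(0 <= d < q) (d * n p + 1).
  by apply: leq_sum_nat => d _; apply: count_std_le.
have := sum_arith_double (n p) q; move: (\sum_(0 <= d < q) _) hU => S hU hS; nia.
Qed.

Lemma std_low_lower : n p * n p * (q * q)
  <= 2 * n p * \sum_(0 <= d < q) count_std exp_bound d + (4 * n p * K + n p * n p) * q.
Proof.
have hU : \sum_(0 <= d < q) (d * n p + 1)
    <= \sum_(0 <= d < q) count_std exp_bound d + q * (2 * K).
  have -> : q * (2 * K) = \sum_(0 <= i < q) (2 * K) by rewrite sum_nat_const_nat subn0.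
  rewrite -big_split /=.
  apply: leq_sum_nat => d /andP [_ hd]; apply: count_std_low_deg_ge => //.
  rewrite /exp_bound /deg_bound.
  have : d * n p <= (q + (q + 2 * K + 1)) * n p by rewrite leq_mul2r; lia.
  lia.
have := sum_arith_double (n p) q; move: (\sum_(0 <= d < q) (_ + 1)) hU => S hU hS; nia.
Qed.

Definition stair_err := 8 * K * n p + 4 * K * K + 2 * n p * n p.

Lemma gap_stair_upper r : r < p ->
  2 * n p * \sum_(0 <= j < q + 2 * K + 1) ((q * (n r.+1 - n r) + 2 * K) - j * n p)
    <= q * q * ((n r.+1 - n r) * (n r.+1 - n r)) + q * stair_err.
Proof.
move=> hr; have := stair_sum_upper (q * (n r.+1 - n r) + 2 * K) (q + 2 * K + 1) np_gt0.
rewrite /stair_sum /stair_err => h; apply: leq_trans h _.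
have := gap_le_np hr; move: (n r.+1 - n r) => D hD.
have hx : q * D <= q * n p by rewrite leq_mul2l hD orbT.
rewrite mulnACA; move: (q * D) hx => x hx.
have h1 : K * x <= K * (q * n p) by rewrite leq_mul2l hx orbT.
have h2 : n p * x <= n p * (q * n p) by rewrite leq_mul2l hx orbT.
have h3 : K * K <= K * K * q by rewrite leq_pmulr.
have h4 : n p * K <= n p * K * q by rewrite leq_pmulr.
lia.
Qed.

Lemma gap_stair_lower r : r < p ->
  q * q * ((n r.+1 - n r) * (n r.+1 - n r))
    <= 2 * n p * \sum_(0 <= j < q) (q * n r.+1 - (q * n r + j * n p + 1)) + 2 * q * n p.
Proof.
move=> hr; have hn := n_leq (leqnSn r) hr; have hD := gap_le_np hr.
have -> : \sum_(0 <= j < q) (q * n r.+1 - (q * n r + j * n p + 1)) =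
    stair_sum (n p) (q * (n r.+1 - n r) - 1) q.
  apply: eq_big_nat => j _.
  have : q * n r <= q * n r.+1 by rewrite leq_mul2l hn orbT.
  rewrite mulnBr; lia.
have hx : q * (n r.+1 - n r) <= q * n p by rewrite leq_mul2l hD orbT.
have := @stair_sum_lower (n p) (q * (n r.+1 - n r) - 1) q np_gt0
  (leq_trans (leq_subr 1 _) hx).
rewrite [q * q * _]mulnACA; move: (stair_sum _ _ q) => S.
move: (q * (n r.+1 - n r)) hx => [|y] hy hS; first by rewrite muln0.
rewrite subn1 /= in hS; nia.
Qed.

Lemma std_high_upper :
  2 * n p * \sum_(0 <= j < q + 2 * K + 1) count_std exp_bound (q + j)
    <= sum_sq_gaps * (q * q)
       + (2 * n p * n p * K + 2 * n p * K * (K * n p + 1) + p * stair_err) * q.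
Proof.
set T := q + 2 * K + 1.
pose G r j := q * (n r.+1 - n r) + 2 * K - j * n p.
have hU j : count_std exp_bound (q + j)
    <= ((0 <= j) && (j < K)) * ((q + K) * n p + 1) + \sum_(0 <= r < p) G r j.
  case: (ltnP j K) => hj /=; last by rewrite mul0n add0n; apply: count_std_high_deg_le.
  rewrite mul1n; apply: leq_trans (leq_addr _ _); apply: leq_trans (count_std_le _ _) _; nia.
have hsum : \sum_(0 <= j < T) count_std exp_bound (q + j)
    <= K * ((q + K) * n p + 1) + \sum_(0 <= r < p) \sum_(0 <= j < T) G r j.
  apply: leq_trans (leq_sum_nat (fun j _ => hU j)) _.
  rewrite big_split -big_distrl sum_itv_indicator exchange_big_nat leq_add2r.
  by rewrite leq_mul2r subn0 geq_minl orbT.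
have hgaps : 2 * n p * \sum_(0 <= r < p) \sum_(0 <= j < T) G r j
    <= sum_sq_gaps * (q * q) + p * (q * stair_err).
  rewrite big_distrr /sum_sq_gaps big_distrl /=.
  have -> : p * (q * stair_err) = \sum_(0 <= r < p) (q * stair_err).
    by rewrite sum_nat_const_nat subn0.
  rewrite -big_split; apply: leq_sum_nat => r /andP [_ hr].
  by rewrite [_ * (q * q)]mulnC; apply: gap_stair_upper.
have hq1 : 2 * n p * K * (K * n p + 1) <= 2 * n p * K * (K * n p + 1) * q by rewrite leq_pmulr.
move: hsum hgaps hq1; move: (\sum_(0 <= j < T) _) (\sum_(0 <= r < p) _) => A B; nia.
Qed.

Lemma std_high_lower : sum_sq_gaps * (q * q)
  <= 2 * n p * \sum_(0 <= j < q + 2 * K + 1) count_std exp_bound (q + j)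
     + (4 * n p * p * K + 2 * p * n p) * q.
Proof.
pose H r j := q * n r.+1 - (q * n r + j * n p + 1).
have hsum : \sum_(0 <= j < q) \sum_(0 <= r < p) H r j
    <= \sum_(0 <= j < q + 2 * K + 1) count_std exp_bound (q + j) + q * (p * (2 * K)).
  apply: leq_trans (_ : \sum_(0 <= j < q) (count_std exp_bound (q + j) + p * (2 * K)) <= _).
    apply: leq_sum_nat => j /andP [_ hj]; apply: count_std_high_deg_ge.
    rewrite /exp_bound /deg_bound.
    have : (q + j) * n p <= (q + (q + 2 * K + 1)) * n p by rewrite leq_mul2r; lia.
    lia.
  rewrite big_split /= sum_nat_const_nat subn0 leq_add2r.
  by apply: leq_sum_nat_prefix; lia.
have hgaps : sum_sq_gaps * (q * q)
    <= 2 * n p * \sum_(0 <= j < q) \sum_(0 <= r < p) H r j + p * (2 * q * n p).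
  rewrite exchange_big_nat /= big_distrr /sum_sq_gaps big_distrl /=.
  have -> : p * (2 * q * n p) = \sum_(0 <= r < p) (2 * q * n p).
    by rewrite sum_nat_const_nat subn0.
  rewrite -big_split; apply: leq_sum_nat => r /andP [_ hr].
  by rewrite [_ * (q * q)]mulnC; apply: gap_stair_lower.
move: hsum hgaps; move: (\sum_(0 <= j < q) \sum_(0 <= r < p) H r j) => A.
move: (\sum_(0 <= j < q + 2 * K + 1) count_std exp_bound (q + j)) => B; nia.
Qed.

End Counting.

Lemma std_total_bounds K : (forall d a, K <= a -> a + K <= d * n p -> inA d a) ->
  exists C, forall q, 0 < q ->
    2 * n p * std_total K q <= (n p * n p + sum_sq_gaps) * (q * q) + C * q /\
    (n p * n p + sum_sq_gaps) * (q * q) <= 2 * n p * std_total K q + C * q.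
Proof.
move=> hK.
exists (2 * n p + (2 * n p * n p * K + 2 * n p * K * (K * n p + 1) + p * stair_err K)
  + (4 * n p * K + n p * n p) + (4 * n p * p * K + 2 * p * n p)) => q hq.
have := std_low_upper K hq; have := std_high_upper hK hq.
have := std_low_lower hK hq; have := std_high_lower hK hq.
rewrite std_total_split; move: (\sum_(0 <= d < q) _) (\sum_(0 <= j < _) _) => A B.
lia.
Qed.


Section Monomials.
Variable K : nat.
Hypothesis hK : forall d a, K <= a -> a + K <= d * n p -> inA d a.
Variable q : nat.
Hypothesis hq : 0 < q.

Definition frob_exp r := (mon2 (n r) (n p - n r) *+ q)%MM.

Lemma frob_expE0 r : frob_exp r ord0 = n r * q.
Proof. by rewrite /frob_exp mulmnE mon2E0. Qed.

Lemma frob_expE1 r : frob_exp r i1 = (n p - n r) * q.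
Proof. by rewrite /frob_exp mulmnE mon2E1. Qed.

Definition frob_covered (m : 'X_{1..2}) := exists2 r, r <= p &
  (frob_exp r <= m)%MM /\ inS n p ((m - frob_exp r)%MM ord0) ((m - frob_exp r)%MM i1).

Definition std_mon (x : 'I_(deg_bound K q) * 'I_(exp_bound K q)) : 'X_{1..2} :=
  mon2 x.2 (x.1 * n p - x.2).

Definition std_set := [set x : 'I_(deg_bound K q) * 'I_(exp_bound K q) | stdA q x.1 x.2].

Lemma std_set_inS x : x \in std_set -> inS n p (std_mon x ord0) (std_mon x i1).
Proof.
case: x => x1 x2; rewrite inE /= => /asboolP [hA _]; apply/inS_inA; exists x1.
by rewrite /std_mon /= mon2E0 mon2E1; split => //; have := inA_le hA; lia.
Qed.

Lemma std_set_uncovered x : x \in std_set -> ~ frob_covered (std_mon x).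
Proof.
case: x => x1 x2; rewrite inE /= => /asboolP [hA hc] [r hr [hle hS]]; apply: hc.
have Npos := np_gt0.
move: hle hS; rewrite lem2E !mnmBE /std_mon /= !mon2E0 !mon2E1 frob_expE0 frob_expE1.
move=> /andP [h0 h1] /inS_inA [j [hj hsum]].
exists r, j; rewrite [q * n r]mulnC; split => //.
have hle := inA_le hA; have hr' := n_le_np hr.
have : x1 * n p = (q + j) * n p.
  have : (n p - n r) * q = n p * q - n r * q by rewrite mulnBl.
  have : n r * q <= n p * q by rewrite leq_mul2r hr' orbT.
  rewrite mulnDl; lia.
by move/eqP; rewrite eqn_pmul2r // => /eqP.
Qed.

Lemma inS_covered_or_std (m : 'X_{1..2}) : inS n p (m ord0) (m i1) ->
  frob_covered m \/ exists2 x, x \in std_set & std_mon x = m.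
Proof.
move=> /inS_inA [d [hA hab]].
have Npos := np_gt0.
case: (asboolP (coveredA q d (m ord0))) => hc.
  left; move: hc => [r [j [hr hdj hqa hj]]]; exists r => //.
  have hle := inA_le hj; have hr' := n_le_np hr.
  have e1 : (n p - n r) * q = n p * q - n r * q by rewrite mulnBl.
  have e2 : n r * q <= n p * q by rewrite leq_mul2r hr' orbT.
  move: hab; rewrite hdj mulnDl => hab; split.
    by rewrite lem2E frob_expE0 frob_expE1 [n r * q]mulnC hqa /=; lia.
  by rewrite !mnmBE frob_expE0 frob_expE1; apply/inS_inA; exists j; rewrite mulnC; split => //; lia.
right.
have hd : d < deg_bound K q := stdA_deg_lt hK hq hA hc.
have ha : m ord0 < exp_bound K q.
  have := inA_le hA; rewrite /exp_bound.
  have : d * n p <= deg_bound K q * n p by rewrite leq_mul2r ltnW ?orbT.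
  lia.
exists (Ordinal hd, Ordinal ha); first by rewrite inE; apply/asboolP.
by rewrite [RHS]mon2_eta /std_mon /=; congr mon2; lia.
Qed.

Lemma std_mon_inj : {in std_set &, injective std_mon}.
Proof.
move=> [x1 x2] [y1 y2]; rewrite !inE /= => /asboolP [hx _] /asboolP [hy _].
rewrite /std_mon /= => /mon2_inj [h1 h2].
have hlx := inA_le hx; have hly := inA_le hy; have Npos := np_gt0.
have : x1 * n p = y1 * n p by lia.
by move/eqP; rewrite eqn_pmul2r // => /eqP e; congr pair; apply/val_inj.
Qed.

Lemma card_std_set : #|std_set| = std_total K q.
Proof.
rewrite -sum1_card big_mkcond /=.
rewrite (eq_bigr (fun x : 'I_(deg_bound K q) * 'I_(exp_bound K q) => (stdA q x.1 x.2 : nat))).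
  rewrite -(pair_big xpredT xpredT
    (fun (i : 'I_(deg_bound K q)) (j : 'I_(exp_bound K q)) => (stdA q i j : nat))) /=.
  rewrite /std_total /count_std [RHS]big_mkord; apply: eq_bigr => i _.
  by rewrite big_mkord.
by move=> x _; rewrite inE; case: stdA.
Qed.

Section Linear.
Local Open Scope ring_scope.
Variable k : fieldType.

Lemma genS_expn r : genS k n p r ^+ q = 'X_[frob_exp r].
Proof. by rewrite /genS mpolyXn. Qed.

Lemma frob_covered_supp (c : {mpoly k[2]}) r (m : 'X_{1..2}) : (r <= p)%N ->
  in_kS n p c -> m \in msupp (c * 'X_[frob_exp r]) -> frob_covered m.
Proof.
move=> hr hc hm.
have := perm_mem (msuppMX c (frob_exp r)) m; rewrite hm => /esym /mapP [m' hm' ->].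
by exists r => //; split; [exact: lem_addr | rewrite addmC addmK; apply: hc].
Qed.

(* Each covered monomial of [g] is charged to one generator, chosen by [epsilon]. *)
Lemma in_frob_ideal_covered (g : {mpoly k[2]}) :
  (forall m, m \in msupp g -> frob_covered m) -> in_frob_ideal n p q g.
Proof.
move=> hcov.
pose P m r := [/\ (r <= p)%N, (frob_exp r <= m)%MM &
  inS n p ((m - frob_exp r)%MM ord0) ((m - frob_exp r)%MM i1)].
pose rsel m := epsilon (inhabits 0%N) (P m).
have hrsel m : m \in msupp g -> P m (rsel m).
  by move=> hm; apply: epsilon_spec; have [r h1 [h2 h3]] := hcov m hm; exists r.
pose c (r : nat) := \sum_(m <- msupp g)
  (((rsel m == r)%:R * g@_m) *: ('X_[m - frob_exp r] : {mpoly k[2]})).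
exists c; split.
  move=> r; apply: in_kS_sum => m; apply: in_kS_scaleX.
  case: (boolP (m \in msupp g)) => hm; last by left; rewrite memN_msupp_eq0 // mulr0.
  case: (rsel m =P r) => [<-|_]; last by left; rewrite mulr0n mul0r.
  by right; have [_ _ h] := hrsel m hm.
have -> : \sum_(r < p.+1) c r * genS k n p r ^+ q = \sum_(r < p.+1)
    \sum_(m <- msupp g) (((rsel m == r)%:R * g@_m) *: ('X_[m] : {mpoly k[2]})).
  apply: eq_bigr => r _; rewrite genS_expn /c big_distrl /=; apply: eq_big_seq => m hm.
  rewrite -scalerAl -mpolyXD.
  case: (rsel m =P r) => [e|_]; last by rewrite mulr0n mul0r !scale0r.
  by have [_ h2 _] := hrsel m hm; rewrite -e submK.
rewrite exchange_big /= [LHS]mpolyE; apply: eq_big_seq => m hm.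
rewrite -scaler_suml -mulr_suml.
have [h1 _ _] := hrsel m hm; have hr : (rsel m < p.+1)%N by [].
rewrite (bigD1 (Ordinal hr)) //= eqxx mulr1n big1 ?addr0 ?mul1r //.
move=> r hr'; case: (rsel m =P r) => [e|_]; last by rewrite mulr0n.
by exfalso; move/eqP: hr'; apply; apply/val_inj; rewrite /= e.
Qed.

Definition std_basis (i : 'I_#|std_set|) := std_mon (enum_val i).

Lemma std_basis_inj : injective std_basis.
Proof.
move=> i j /(std_mon_inj (enum_valP i) (enum_valP j)); exact: enum_val_inj.
Qed.

Lemma std_basis_indep : indep_mod n p q (fun i => ('X_[std_basis i] : {mpoly k[2]})).
Proof.
split=> [i|a [c [hc heq]] i]; first exact/in_kS_X/std_set_inS/enum_valP.
have := congr1 (mcoeff (std_basis i)) heq; rewrite !raddf_sum /=.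
rewrite (bigD1 i) //= mcoeffZ mcoeffX eqxx mulr1 big1 ?addr0; last first.
  move=> j hj; rewrite mcoeffZ mcoeffX.
  by case: eqP => [/std_basis_inj e|]; [move: hj; rewrite e eqxx | rewrite mulr0].
move=> ->; apply: big1 => r _.
rewrite genS_expn; apply/eqP; rewrite mcoeff_eq0; apply/negP => hm.
exact: std_set_uncovered (enum_valP i) (frob_covered_supp (ltn_ord r) (hc r) hm).
Qed.

Lemma frob_covered_std_coef0 (g : {mpoly k[2]}) : in_kS n p g ->
  (forall j, g@_(std_basis j) = 0) -> forall m, m \in msupp g -> frob_covered m.
Proof.
move=> hg h0 m hm; have [//|[x hx hxm]] := inS_covered_or_std (hg m hm).
move: hm; rewrite mcoeff_msupp -hxm.
by rewrite -[x](enum_rankK_in hx) // -/(std_basis _) h0 eqxx.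
Qed.

Lemma std_basis_maximal (f : 'I_#|std_set|.+1 -> {mpoly k[2]}) : ~ indep_mod n p q f.
Proof.
move=> [hf hind].
have [a [[i0 hi0] ha]] := exists_left_kernel_vector
  (\matrix_(i < #|std_set|.+1, j < #|std_set|) (f i)@_(std_basis j)).
pose g := \sum_i a i *: f i.
suff /hind /(_ i0) hai0 : in_frob_ideal n p q g by rewrite hai0 eqxx in hi0.
apply/in_frob_ideal_covered/frob_covered_std_coef0.
  by apply: in_kS_sum => i; apply: in_kS_scale.
move=> j; rewrite /g raddf_sum -[RHS](ha j) /=.
by apply: eq_bigr => i _; rewrite mcoeffZ mxE.
Qed.

Lemma quot_dim_std : quot_dim k n p q #|std_set|.
Proof.
split; first by exists (fun i => 'X_[std_basis i]); apply: std_basis_indep.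
exact: std_basis_maximal.
Qed.

End Linear.

End Monomials.

Section Value.
Local Open Scope ring_scope.

Lemma natr_sum_sq_gaps : (sum_sq_gaps%:R : rat)
  = \sum_(0 <= r < p) ((n r.+1)%:R - (n r)%:R) ^+ 2.
Proof.
rewrite /sum_sq_gaps natr_sum; apply: eq_big_nat => r /andP [_ hr].
by rewrite natrM natrB ?expr2 // ltnW // hinc.
Qed.

Lemma HK_value_eq :
  (1 + (\sum_(1 <= r < p.+1) ((n r)%:R - 1) * ((n r)%:R - (n r.-1)%:R)) / (n p)%:R : rat)
  = (n p * n p + sum_sq_gaps)%:R / (2 * n p)%:R.
Proof.
have hN : (n p)%:R != 0 :> rat by rewrite pnatr_eq0 -lt0n np_gt0.
have := @sum_telescope_sq _ (fun r => (n r)%:R : rat) p; rewrite hn0 => /(_ erefl).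
rewrite big_add1 /= -natr_sum_sq_gaps; move: (\sum_(0 <= r < p) _) => S hS.
have -> : S = (((n p)%:R ^+ 2 + sum_sq_gaps%:R - 2 * (n p)%:R) / 2 : rat).
  by rewrite -hS; field.
by rewrite natrD !natrM; field; rewrite hN.
Qed.

End Value.
End Semigroup.

Local Open Scope ring_scope.

Theorem theorem5p1 (k : fieldType) (p : nat) (n : nat -> nat)
    (hp : (1 <= p)%N)
    (hn0 : n 0%N = 0%N)
    (hinc : forall i, (i < p)%N -> (n i < n i.+1)%N)
    (hgcd : \big[gcdn/0%N]_(1 <= i < p.+1) n i = 1%N) :
  exists len : nat -> nat,
    (forall q, (0 < q)%N -> quot_dim k n p q (len q)) /\
    HK_limit k len
      (1 + (\sum_(1 <= r < p.+1) ((n r)%:R - 1) * ((n r)%:R - (n r.-1)%:R))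
             / (n p)%:R).
Proof.
have [K hK] := inA_middle hp hn0 hinc hgcd.
have [C hC] := std_total_bounds hp hn0 hinc hK.
exists (fun q => #|std_set n p K q|); split => [q hq|].
  exact: quot_dim_std.
apply: HK_limit_of_cvg; rewrite HK_value_eq //.
apply: (@rat_cvg_quadratic _ _ _ C) => [|q hq]; first by rewrite muln_gt0 (np_gt0 hp hn0 hinc).
by rewrite card_std_set; apply: hC.
Qed.
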